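(* Let $X$ be a real Hilbert space, $f,g:X\to\mathbb{R}\cup\{+\infty\}$ proper $\Phi_{lsc}$-convex functions and $\alpha\in\mathbb{R}$. If there exist $\varphi_1\in\mathrm{supp}(f)$ and $\varphi_2\in\mathrm{supp}(g)$ with $\{x:\varphi_1(x)<\alpha\}\cap\{x:\varphi_2(x)<\alpha\}=\emptyset$, then for every $\varepsilon>0$ there exist $x_1\in\mathrm{dom}(f)$ and $x_2\in\mathrm{dom}(g)$ such that $f$ and $g$ satisfy $ZS(\varepsilon,x_1,x_2)$, i.e. $0\in\mathrm{co}\big(\partial^\varepsilon_{lsc}f(x_1)\cup\partial^\varepsilon_{lsc}g(x_2)\big)$.
   Context: $\Phi_{lsc}$ is the class of functions $\varphi(x)=-a\|x\|^2+\langle v,x\rangle+c$ ($a\ge0$, $v\in X^*$, $c\in\mathbb{R}$); $\mathrm{supp}(f)=\{\varphi\in\Phi_{lsc}:\varphi\le f\}$; $f$ is $\Phi_{lsc}$-convex if $f=\sup\mathrm{supp}(f)$ pointwise; proper means $\mathrm{supp}(f)\ne\emptyset$ and $\mathrm{dom}(f)\ne\emptyset$. For $\varepsilon\ge0$, $\partial^\varepsilon_{lsc}f(\bar x)$ is the set of $(a,v)\in\mathbb{R}_+\times X^*$ with $f(x)-f(\bar x)\ge\langle v,x-\bar x\rangle-a\|x\|^2+a\|\bar x\|^2-\varepsilon$ for all $x\in X$; convex hull $\mathrm{co}$ is taken in $\mathbb{R}\times X^*$ and $0$ means $(0,0)$. *)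

From Stdlib Require Import Reals List.
Import ListNotations.
Open Scope R_scope.

Record Hilbert := {
  HT :> Type;
  hadd : HT -> HT -> HT;
  hopp : HT -> HT;
  hzero : HT;
  hscal : R -> HT -> HT;
  hinner : HT -> HT -> R;
  hadd_assoc : forall x y z, hadd x (hadd y z) = hadd (hadd x y) z;
  hadd_comm : forall x y, hadd x y = hadd y x;
  hadd_zero : forall x, hadd x hzero = x;
  hadd_opp : forall x, hadd x (hopp x) = hzero;
  hscal_one : forall x, hscal 1 x = x;
  hscal_assoc : forall a b x, hscal a (hscal b x) = hscal (a * b) x;
  hscal_distr_l : forall a x y, hscal a (hadd x y) = hadd (hscal a x) (hscal a y);
  hscal_distr_r : forall a b x, hscal (a + b) x = hadd (hscal a x) (hscal b x);
  hinner_sym : forall x y, hinner x y = hinner y x;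
  hinner_add : forall x y z, hinner (hadd x y) z = hinner x z + hinner y z;
  hinner_scal : forall a x y, hinner (hscal a x) y = a * hinner x y;
  hinner_pos : forall x, 0 <= hinner x x;
  hinner_def : forall x, hinner x x = 0 -> x = hzero;
  hcomplete : forall u : nat -> HT,
    (forall eps, 0 < eps -> exists N, forall n m, (N <= n)%nat -> (N <= m)%nat ->
        sqrt (hinner (hadd (u n) (hopp (u m))) (hadd (u n) (hopp (u m)))) < eps) ->
    exists l, forall eps, 0 < eps -> exists N, forall n, (N <= n)%nat ->
        sqrt (hinner (hadd (u n) (hopp l)) (hadd (u n) (hopp l))) < eps
}.

Definition hnorm (X : Hilbert) (x : X) : R := sqrt (hinner X x x).
Definition hsub (X : Hilbert) (x y : X) : X := hadd X x (hopp X y).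

Definition is_dual (X : Hilbert) (v : X -> R) : Prop :=
  (forall x y, v (hadd X x y) = v x + v y) /\
  (forall a x, v (hscal X a x) = a * v x) /\
  (exists M, forall x, Rabs (v x) <= M * hnorm X x).

(* Extended-real-valued functions X -> R ∪ {+∞}; None stands for +∞. *)
Definition ERfun (X : Hilbert) := X -> option R.

Definition ler_ext (r : R) (e : option R) : Prop :=
  match e with Some s => r <= s | None => True end.

Definition dom (X : Hilbert) (f : ERfun X) : X -> Prop :=
  fun x => exists r, f x = Some r.

(* An element of Φ_lsc, given by parameters (a, v, c) with a >= 0, v ∈ X^*. *)
Definition Phi_lsc (X : Hilbert) (a : R) (v : X -> R) (c : R) : Prop :=
  0 <= a /\ is_dual X v.

Definition phi_eval (X : Hilbert) (a : R) (v : X -> R) (c : R) (x : X) : R :=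
  - a * (hnorm X x) ^ 2 + v x + c.

Definition in_supp (X : Hilbert) (f : ERfun X) (a : R) (v : X -> R) (c : R) : Prop :=
  Phi_lsc X a v c /\ forall x, ler_ext (phi_eval X a v c x) (f x).

Definition supp_nonempty (X : Hilbert) (f : ERfun X) : Prop :=
  exists a v c, in_supp X f a v c.

Definition proper (X : Hilbert) (f : ERfun X) : Prop :=
  supp_nonempty X f /\ exists x, dom X f x.

(* f = sup supp(f) pointwise (sup in R ∪ {+∞}) *)
Definition Phi_lsc_convex (X : Hilbert) (f : ERfun X) : Prop :=
  forall x,
    let S := fun y => exists a v c, in_supp X f a v c /\ y = phi_eval X a v c x in
    match f x with
    | Some r => is_lub S r
    | None => forall M, exists y, S y /\ M < y
    end.

Definition eps_subdiff (X : Hilbert) (f : ERfun X) (eps : R) (xb : X)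
    (a : R) (v : X -> R) : Prop :=
  match f xb with
  | None => False
  | Some fxb =>
      0 <= a /\ is_dual X v /\
      forall x, ler_ext (fxb + v (hsub X x xb) - a * (hnorm X x) ^ 2
                         + a * (hnorm X xb) ^ 2 - eps) (f x)
  end.

(* (0,0) ∈ co(A) for A ⊆ R × X^*, co = set of finite convex combinations *)
Definition zero_in_co (X : Hilbert) (A : R -> (X -> R) -> Prop) : Prop :=
  exists l : list (R * (R * (X -> R))),
    l <> [] /\
    Forall (fun p => 0 <= fst p /\ A (fst (snd p)) (snd (snd p))) l /\
    fold_right (fun p s => fst p + s) 0 l = 1 /\
    fold_right (fun p s => fst p * fst (snd p) + s) 0 l = 0 /\
    (forall x, fold_right (fun p s => fst p * snd (snd p) x + s) 0 l = 0).

Definition ZS (X : Hilbert) (f g : ERfun X) (eps : R) (x1 x2 : X) : Prop :=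
  zero_in_co X (fun a v => eps_subdiff X f eps x1 a v \/ eps_subdiff X g eps x2 a v).

(* If one of the two quadratic minorants is bounded below, so is the corresponding
   function, and an ε-maximiser of -f gives a point where (0,0) is an ε-subgradient.
   Otherwise each minorant tends to -∞ along some direction; a common such direction
   would make the sublevel sets meet, which forces both minorants to be affine,
   φ_i = v_i + c_i, with v_2 d >= 0 whenever v_1 d < 0.  Then v_2 = -μ v_1 with μ >= 0,
   and ε-maximisers of v_1 - f and v_2 - g give ε-subgradients (0,v_1), (0,v_2)
   whose convex combination with weights μ/(1+μ), 1/(1+μ) vanishes. *)
From Stdlib Require Import Reals Lra Classical List.
Import ListNotations.
Open Scope R_scope.

Lemma quadratic_eventually_lt (A B C alpha : R) : 0 <= A -> (0 < A \/ B < 0) ->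
  exists T, forall t, T <= t -> - A * t ^ 2 + B * t + C < alpha.
Proof.
  intros HA HAB.
  pose proof (Rle_abs B); pose proof (Rle_abs (C - alpha)).
  pose proof (Rabs_pos B); pose proof (Rabs_pos (C - alpha)).
  set (K := Rabs B + Rabs (C - alpha) + 1).
  destruct HAB as [Apos | Bneg].
  - exists (K / A + 1); intros t Ht.
    assert (HKA : A * (K / A) = K) by (field; lra).
    assert (0 <= K / A) by (apply Rle_mult_inv_pos; unfold K; lra).
    assert (A * t >= K) by nra.
    assert (A * t * t >= K * t) by nra.
    unfold K in *; simpl; nra.
  - exists (K / - B); intros t Ht.
    assert (HKB : - B * (K / - B) = K) by (field; lra).
    assert (- B * t >= K) by nra.
    assert (0 <= A * t ^ 2) by (apply Rmult_le_pos; [lra | apply pow2_ge_0]).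
    unfold K in *; nra.
Qed.

Lemma ler_ext_trans (r r' : R) (e : option R) : r <= r' -> ler_ext r' e -> ler_ext r e.
Proof. destruct e; simpl; lra. Qed.

Section Minorants.
Variable X : Hilbert.

Lemma dual_zero (v : X -> R) : is_dual X v -> v (hzero X) = 0.
Proof.
  intros [Hadd _]. pose proof (Hadd (hzero X) (hzero X)) as H.
  rewrite hadd_zero in H. lra.
Qed.

Lemma dual_sub (v : X -> R) (x y : X) : is_dual X v -> v (hsub X x y) = v x - v y.
Proof.
  intros Hv. pose proof (dual_zero v Hv) as H0. destruct Hv as [Hadd _].
  unfold hsub. rewrite Hadd. pose proof (Hadd y (hopp X y)) as H.
  rewrite hadd_opp in H. lra.
Qed.

Lemma dual_const0 : is_dual X (fun _ => 0).
Proof.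
  split; [intros; ring | split; [intros; ring |]].
  exists 0. intros. rewrite Rabs_R0. lra.
Qed.

Lemma hnorm_sq (x : X) : hnorm X x ^ 2 = hinner X x x.
Proof. unfold hnorm. rewrite <- Rsqr_pow2. apply Rsqr_sqrt, hinner_pos. Qed.

Lemma phi_eval_scal (a : R) (v : X -> R) (c t : R) (d : X) : is_dual X v ->
  phi_eval X a v c (hscal X t d) = - (a * hinner X d d) * t ^ 2 + v d * t + c.
Proof.
  intros [_ [Hscal _]]. unfold phi_eval.
  rewrite hnorm_sq, Hscal, hinner_scal, hinner_sym, hinner_scal. ring.
Qed.

(* [d] is a direction along which the minorant [phi_eval a v c] tends to -∞. *)
Definition escapes (a : R) (v : X -> R) (d : X) : Prop :=
  0 < a * hinner X d d \/ v d < 0.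

Lemma escapes_nonzero (a : R) (v : X -> R) (d : X) :
  is_dual X v -> escapes a v d -> 0 < hinner X d d.
Proof.
  intros Hv Hesc. destruct (hinner_pos X d) as [| Hdd]; [assumption |].
  exfalso. pose proof (hinner_def X d (eq_sym Hdd)) as ->.
  unfold escapes in Hesc. rewrite <- Hdd, Rmult_0_r, dual_zero in Hesc by assumption.
  destruct Hesc; lra.
Qed.

Lemma escape_of_unbounded (a : R) (v : X -> R) (c : R) :
  ~ (exists m, forall x, m <= phi_eval X a v c x) -> exists d, escapes a v d.
Proof.
  intros Hunb. apply NNPP. intros Hnone. apply Hunb. exists c. intros x.
  apply Rnot_lt_le. intros Hlt. apply Hnone. exists x.
  unfold escapes, phi_eval in *. rewrite hnorm_sq in Hlt. lra.
Qed.

Lemma sublevels_meet_of_common_escape (a1 a2 c1 c2 alpha : R) (v1 v2 : X -> R) (d : X) :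
  0 <= a1 -> 0 <= a2 -> is_dual X v1 -> is_dual X v2 ->
  escapes a1 v1 d -> escapes a2 v2 d ->
  exists x, phi_eval X a1 v1 c1 x < alpha /\ phi_eval X a2 v2 c2 x < alpha.
Proof.
  intros Ha1 Ha2 Hv1 Hv2 E1 E2. pose proof (hinner_pos X d).
  destruct (quadratic_eventually_lt (a1 * hinner X d d) (v1 d) c1 alpha) as [T1 HT1];
    [nra | exact E1 |].
  destruct (quadratic_eventually_lt (a2 * hinner X d d) (v2 d) c2 alpha) as [T2 HT2];
    [nra | exact E2 |].
  exists (hscal X (Rmax T1 T2) d). rewrite !phi_eval_scal by assumption.
  split; [apply HT1, Rmax_l | apply HT2, Rmax_r].
Qed.

Lemma flat_of_disjoint_sublevels (a1 a2 c1 c2 alpha : R) (v1 v2 : X -> R) (d : X) :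
  0 <= a1 -> 0 <= a2 -> is_dual X v1 -> is_dual X v2 -> escapes a2 v2 d ->
  (forall x, ~ (phi_eval X a1 v1 c1 x < alpha /\ phi_eval X a2 v2 c2 x < alpha)) ->
  a1 = 0.
Proof.
  intros Ha1 Ha2 Hv1 Hv2 E2 Hdisj.
  destruct Ha1 as [Ha1 |]; [exfalso | lra].
  pose proof (escapes_nonzero a2 v2 d Hv2 E2).
  assert (E1 : escapes a1 v1 d) by (left; nra).
  destruct (sublevels_meet_of_common_escape a1 a2 c1 c2 alpha v1 v2 d)
    as [x Hx]; [lra | lra | assumption .. |].
  exact (Hdisj x Hx).
Qed.

(* Kernel inclusion: moving along ker v1 from d1 keeps v1 < 0, so v2 cannot change there. *)
Lemma dual_opposite_of_halfspace_incl (v1 v2 : X -> R) (d1 : X) :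
  is_dual X v1 -> is_dual X v2 -> v1 d1 < 0 ->
  (forall d, v1 d < 0 -> 0 <= v2 d) ->
  exists mu, 0 <= mu /\ forall x, v2 x = - mu * v1 x.
Proof.
  intros [Hadd1 [Hscal1 _]] [Hadd2 [Hscal2 _]] Hd1 Hincl.
  exists (v2 d1 / - v1 d1). split.
  { apply Rle_mult_inv_pos; [apply Hincl |]; lra. }
  intros x. set (y := hadd X x (hscal X (- (v1 x / v1 d1)) d1)).
  assert (Hy1 : v1 y = 0) by (unfold y; rewrite Hadd1, Hscal1; field; lra).
  assert (Hy2 : v2 y = 0).
  { apply NNPP. intros Hne.
    set (t := - (v2 d1 + 1) / v2 y).
    assert (Hd : v1 (hadd X d1 (hscal X t y)) < 0) by (rewrite Hadd1, Hscal1; nra).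
    pose proof (Hincl _ Hd) as H. rewrite Hadd2, Hscal2 in H.
    unfold t in H. field_simplify in H; [lra | exact Hne]. }
  unfold y in Hy2. rewrite Hadd2, Hscal2 in Hy2.
  replace (v2 x) with (v1 x / v1 d1 * v2 d1) by lra. field. lra.
Qed.

Lemma affine_minorant_of_in_supp (f : ERfun X) (v : X -> R) (c : R) :
  in_supp X f 0 v c -> forall x, ler_ext (v x + c) (f x).
Proof.
  intros [_ Hf] x. eapply ler_ext_trans; [| apply Hf]. unfold phi_eval. lra.
Qed.

(* An ε-maximiser of v - f exists because v - f is bounded above by -c. *)
Lemma eps_subdiff_of_affine_minorant (f : ERfun X) (v : X -> R) (c eps : R) :
  0 < eps -> is_dual X v -> (forall x, ler_ext (v x + c) (f x)) ->
  (exists x, dom X f x) -> exists x1, dom X f x1 /\ eps_subdiff X f eps x1 0 v.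
Proof.
  intros Heps Hv Hmin [x0 [r0 Hx0]].
  set (S := fun y => exists x r, f x = Some r /\ y = v x - r).
  assert (Hbound : bound S).
  { exists (- c). intros y (x & r & Hx & ->).
    pose proof (Hmin x) as Hm. rewrite Hx in Hm. simpl in Hm. lra. }
  assert (Hne : exists y, S y) by (exists (v x0 - r0), x0, r0; auto).
  destruct (completeness S Hbound Hne) as [M [HMub HMlub]].
  assert (Hnear : exists x1 r1, f x1 = Some r1 /\ M - eps < v x1 - r1).
  { apply NNPP. intros Hnone. assert (M <= M - eps); [| lra].
    apply HMlub. intros y (x & r & Hx & ->).
    apply Rnot_lt_le. intros Hlt. apply Hnone. exists x, r. auto. }
  destruct Hnear as (x1 & r1 & Hx1 & Hlt).
  exists x1. split; [exists r1; exact Hx1 |].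
  unfold eps_subdiff. rewrite Hx1. split; [lra | split; [exact Hv |]].
  intros x. destruct (f x) as [r |] eqn:Hx; simpl; [| exact I].
  rewrite dual_sub by exact Hv.
  assert (v x - r <= M) by (apply HMub; exists x, r; auto). lra.
Qed.

Lemma zero_subgradient_of_bounded_minorant (f : ERfun X) (a : R) (v : X -> R) (c m eps : R) :
  0 < eps -> in_supp X f a v c -> (forall x, m <= phi_eval X a v c x) ->
  (exists x, dom X f x) -> exists x1, dom X f x1 /\ eps_subdiff X f eps x1 0 (fun _ => 0).
Proof.
  intros Heps [_ Hf] Hm Hdom.
  apply (eps_subdiff_of_affine_minorant f _ m); [exact Heps | exact dual_const0 | | exact Hdom].
  intros x. apply (ler_ext_trans _ _ _ (Hm x)) in Hf. eapply ler_ext_trans; [| exact Hf]. lra.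
Qed.

Lemma halfspace_incl_of_disjoint_sublevels (c1 c2 alpha : R) (v1 v2 : X -> R) :
  is_dual X v1 -> is_dual X v2 ->
  (forall x, ~ (phi_eval X 0 v1 c1 x < alpha /\ phi_eval X 0 v2 c2 x < alpha)) ->
  forall d, v1 d < 0 -> 0 <= v2 d.
Proof.
  intros Hv1 Hv2 Hdisj d Hd1. apply Rnot_lt_le. intros Hd2.
  destruct (sublevels_meet_of_common_escape 0 0 c1 c2 alpha v1 v2 d) as [x Hx];
    [lra | lra | assumption | assumption | right; exact Hd1 | right; exact Hd2 |].
  exact (Hdisj x Hx).
Qed.

Lemma ZS_of_zero_subgradient (f g : ERfun X) (eps : R) (x1 x2 : X) :
  eps_subdiff X f eps x1 0 (fun _ => 0) \/ eps_subdiff X g eps x2 0 (fun _ => 0) ->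
  ZS X f g eps x1 x2.
Proof.
  intros H. exists [(1, (0, fun _ : X => 0))]. split; [discriminate |].
  split; [constructor; [simpl; split; [lra | exact H] | constructor] |].
  simpl. split; [ring | split; [ring | intros; ring]].
Qed.

Lemma ZS_of_opposite_subgradients (f g : ERfun X) (eps mu : R) (x1 x2 : X)
    (v1 v2 : X -> R) :
  eps_subdiff X f eps x1 0 v1 -> eps_subdiff X g eps x2 0 v2 ->
  0 <= mu -> (forall x, v2 x = - mu * v1 x) -> ZS X f g eps x1 x2.
Proof.
  intros E1 E2 Hmu Hopp.
  exists [(mu / (1 + mu), (0, v1)); (1 / (1 + mu), (0, v2))].
  split; [discriminate |]. split.
  - constructor; [| constructor; [| constructor]]; simpl;
      (split; [apply Rle_mult_inv_pos; lra | auto]).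
  - simpl. split; [field; lra | split; [ring |]].
    intros x. rewrite Hopp. field. lra.
Qed.

End Minorants.

Theorem mainTheorem12 (X : Hilbert) (f g : ERfun X) (alpha : R) :
  proper X f -> proper X g -> Phi_lsc_convex X f -> Phi_lsc_convex X g ->
  (exists a1 v1 c1 a2 v2 c2,
      in_supp X f a1 v1 c1 /\ in_supp X g a2 v2 c2 /\
      (forall x, ~ (phi_eval X a1 v1 c1 x < alpha /\ phi_eval X a2 v2 c2 x < alpha))) ->
  forall eps, 0 < eps ->
    exists x1 x2, dom X f x1 /\ dom X g x2 /\ ZS X f g eps x1 x2.
Proof.
  intros [_ Hdomf] [_ Hdomg] _ _ (a1 & v1 & c1 & a2 & v2 & c2 & S1 & S2 & Hdisj) eps Heps.
  pose proof S1 as [[Ha1 Hv1] _]. pose proof S2 as [[Ha2 Hv2] _].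
  destruct (classic (exists m, forall x, m <= phi_eval X a1 v1 c1 x)) as [[m1 Hm1] | U1].
  { destruct (zero_subgradient_of_bounded_minorant X f a1 v1 c1 m1 eps) as (x1 & D1 & E1);
      try assumption.
    destruct Hdomg as [x2 D2]. exists x1, x2.
    split; [| split]; [assumption .. | apply ZS_of_zero_subgradient; left; exact E1]. }
  destruct (classic (exists m, forall x, m <= phi_eval X a2 v2 c2 x)) as [[m2 Hm2] | U2].
  { destruct (zero_subgradient_of_bounded_minorant X g a2 v2 c2 m2 eps) as (x2 & D2 & E2);
      try assumption.
    destruct Hdomf as [x1 D1]. exists x1, x2.
    split; [| split]; [assumption .. | apply ZS_of_zero_subgradient; right; exact E2]. }
  destruct (escape_of_unbounded X a1 v1 c1 U1) as [d1 E1].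
  destruct (escape_of_unbounded X a2 v2 c2 U2) as [d2 E2].
  assert (a1 = 0) by exact (flat_of_disjoint_sublevels X _ _ _ _ _ _ _ _ Ha1 Ha2 Hv1 Hv2 E2 Hdisj).
  assert (a2 = 0).
  { refine (flat_of_disjoint_sublevels X _ _ _ _ _ _ _ _ Ha2 Ha1 Hv2 Hv1 E1 _).
    intros x [H2 H1]. exact (Hdisj x (conj H1 H2)). }
  subst a1 a2.
  destruct (dual_opposite_of_halfspace_incl X v1 v2 d1) as (mu & Hmu & Hopp);
    [assumption | assumption | unfold escapes in E1; lra |
     exact (halfspace_incl_of_disjoint_sublevels X _ _ _ _ _ Hv1 Hv2 Hdisj) |].
  destruct (eps_subdiff_of_affine_minorant X f v1 c1 eps) as (x1 & D1 & F1);
    [assumption | assumption | exact (affine_minorant_of_in_supp X f v1 c1 S1) | assumption |].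
  destruct (eps_subdiff_of_affine_minorant X g v2 c2 eps) as (x2 & D2 & G2);
    [assumption | assumption | exact (affine_minorant_of_in_supp X g v2 c2 S2) | assumption |].
  exists x1, x2. split; [| split]; [assumption .. |].
  exact (ZS_of_opposite_subgradients X f g eps mu x1 x2 v1 v2 F1 G2 Hmu Hopp).
Qed.
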